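(* For every pair of integers $n\ge 2$ and $1\le r\le n-1$, let $s:=\min\{r,n-r\}$. Then \[ \mathcal{K}^{\mathsf{TJ}}(J(n,r))= \begin{cases} \{k:k\ge 1\}, & s=1,\\ \{s\}, & s\ge 2\text{ and }n=2s,\\ \{s,n-s\}, & s\ge 2\text{ and }n>2s. \end{cases} \]
   Context: All graphs are finite, simple, undirected. A $k$-clique of a graph $H$ is a set of $k$ pairwise adjacent vertices. For a graph $H$ and integer $k\ge1$, the Token Jumping graph $\mathsf{TJ}_k(H)$ has as vertices the $k$-cliques of $H$, and two $k$-cliques $A,B$ are adjacent iff $|A\cap B|=k-1$. For a graph $G$, $\mathcal{K}^{\mathsf{TJ}}(G)=\{k\ge1:\ \exists\text{ a graph }H\text{ with }\mathsf{TJ}_k(H)\cong G\}$. The Johnson graph $J(n,r)$ has as vertices the $r$-subsets of $\{1,\dots,n\}$, two being adjacent iff their intersection has size $r-1$. *)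

From mathcomp Require Import all_boot.
Set Implicit Arguments. Unset Strict Implicit. Unset Printing Implicit Defensive.

Definition simple_graph (V : finType) (e : rel V) : Prop :=
  symmetric e /\ irreflexive e.

Definition graph_iso (T1 T2 : finType) (e1 : rel T1) (e2 : rel T2) : Prop :=
  exists f : T1 -> T2, bijective f /\ forall x y, e2 (f x) (f y) = e1 x y.

Definition is_kclique (V : finType) (e : rel V) (k : nat) (A : {set V}) : bool :=
  (#|A| == k) && [forall x in A, forall y in A, (x != y) ==> e x y].

Definition TJ_vertex (V : finType) (e : rel V) (k : nat) : finType :=
  {A : {set V} | is_kclique e k A}.

Definition TJ_rel (V : finType) (e : rel V) (k : nat) : rel (@TJ_vertex V e k) :=
  fun A B => #|val A :&: val B| == k.-1.

Definition J_vertex (n r : nat) : finType := {A : {set 'I_n} | #|A| == r}.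
Definition J_rel (n r : nat) : rel (J_vertex n r) :=
  fun A B => #|val A :&: val B| == r.-1.

Definition in_KTJ (T : finType) (g : rel T) (k : nat) : Prop :=
  1 <= k /\
  exists (V : finType) (e : rel V), simple_graph e /\ graph_iso (@TJ_rel V e k) g.

From mathcomp Require Import all_boot zify.
Set Implicit Arguments. Unset Strict Implicit. Unset Printing Implicit Defensive.

(* Both [r] and [n - r] lie in K^TJ(J(n,r)), because TJ_k(K_n) = J(n,k) and
   J(n,r) = J(n,n-r); when [r = 1] every [k >= 1] does, taking for H a clique
   on [k - 1] vertices joined to [n] independent vertices.
   Conversely, let [u = a + I] and [v = b + I] be adjacent k-cliques of H. Their
   common neighbours in TJ_k(H) are the cliques [x + I] and the cliques
   [(u + v) - y] with [y] in [I]; each family is a clique of TJ_k(H), no edge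
   joins the two families, and the second one is empty or has all [#|I| = k - 1]
   possible members. Once [2 <= r <= n - 2], some edge of J(n,r) has two
   nonadjacent common neighbours, so the second family is nonempty and some
   common neighbour [w] of [u] and [v] has exactly [k - 1] common neighbours of
   [u] and [v] in its closed neighbourhood. In J(n,r) this count is always
   [r - 1] or [n - r - 1], hence [k = r] or [k = n - r]. *)

Lemma kcliqueP (V : finType) (e : rel V) (k : nat) (A : {set V}) :
  reflect (#|A| = k /\ {in A &, forall x y, x != y -> e x y}) (is_kclique e k A).
Proof.
apply: (iffP andP) => [[/eqP cardA /forall_inP cl] | [cardA cl]]; split => //.
- by move=> x y xA yA; apply: (implyP (forall_inP (cl x xA) y yA)).
- by apply/eqP.
- by apply/forall_inP => x xA; apply/forall_inP => y yA; apply/implyP; apply: cl.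
Qed.

Section CommonNeighbours.

Variables (V : finType) (I : {set V}) (a b : V).

(* For [u = a |: I] and [v = b |: I], the sets of size [#|I|.+1] meeting both
   in [#|I|] points either contain [I] or are contained in [u :|: v]. *)
Definition nbrs_above : {set {set V}} := [set x |: I | x in ~: (a |: (b |: I))].
Definition nbrs_below : {set {set V}} := [set (a |: (b |: I)) :\ y | y in I].

Hypotheses (aI : a \notin I) (bI : b \notin I) (ab : a != b).

Local Notation U := (a |: (b |: I)).

Lemma setU1I_neq x y : x != y -> (x |: I) :&: (y |: I) = I.
Proof.
move=> xy; rewrite -setUIl (_ : [set x] :&: [set y] = set0) ?set0U //.
by apply/setP => z; rewrite !inE; case: eqVneq => // ->; rewrite (negbTE xy).
Qed.

Lemma card_setU1D1 u y : u \notin I -> y \in I -> #|(u |: I) :\ y| = #|I|.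
Proof.
move=> uI yI; have cardUI : #|u |: I| = #|I|.+1 by rewrite cardsU1 uI.
by apply/eqP; rewrite -eqSS -cardUI (cardsD1 y (u |: I)) !inE yI orbT.
Qed.

Lemma card_union_pair : #|U| = #|I|.+2.
Proof. by rewrite !cardsU1 !inE (negbTE ab) (negbTE aI) (negbTE bI). Qed.

Lemma mem_I_neq y : y \in I -> (y != a) && (y != b).
Proof. by move=> yI; apply/andP; split; [apply: contraNneq aI | apply: contraNneq bI] => <-. Qed.

Lemma card_mem_above (X : {set V}) : X \in nbrs_above -> #|X| = #|I|.+1.
Proof. by case/imsetP => x; rewrite !inE !negb_or => /and3P[_ _ xI] ->; rewrite cardsU1 xI. Qed.

Lemma card_mem_below (X : {set V}) : X \in nbrs_below -> #|X| = #|I|.+1.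
Proof.
case/imsetP => y yI ->; apply/eqP; rewrite -eqSS -card_union_pair (cardsD1 y U).
by rewrite !inE yI !orbT.
Qed.

Lemma card_nbrs_above : #|nbrs_above| = #|V| - #|I|.+2.
Proof.
rewrite card_in_imset; first by have := cardsC U; rewrite card_union_pair; lia.
move=> x x'; rewrite !inE !negb_or => /and3P[_ _ xI] _ /setP/(_ x).
by rewrite !inE eqxx (negbTE xI) orbF; case: eqVneq.
Qed.

Lemma card_nbrs_below : #|nbrs_below| = #|I|.
Proof.
rewrite card_in_imset // => y y' yI _ /setP/(_ y).
have /andP[ya yb] := mem_I_neq yI.
by rewrite !inE eqxx yI (negbTE ya) (negbTE yb) /= andbT; case: eqVneq.
Qed.

Lemma meet_above_above (X Y : {set V}) :
  X \in nbrs_above -> Y \in nbrs_above -> X != Y -> #|X :&: Y| = #|I|.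
Proof.
case/imsetP => x _ ->; case/imsetP => x' _ -> xx'.
by rewrite setU1I_neq //; apply: contraNneq xx' => ->.
Qed.

Lemma meet_below_below (X Y : {set V}) :
  X \in nbrs_below -> Y \in nbrs_below -> X != Y -> #|X :&: Y| = #|I|.
Proof.
move=> XB; have cardX := card_mem_below XB; case/imsetP: XB cardX => y yI -> cardX.
case/imsetP => y' y'I -> yy'; have {}yy' : y' != y by apply: contraNneq yy' => ->.
have -> : (U :\ y) :&: (U :\ y') = (U :\ y) :\ y'.
  by apply/setP => z; rewrite !in_setI !in_setD1; case: (z \in U); rewrite ?andbT ?andbF // andbC.
apply/eqP; rewrite -eqSS -cardX (cardsD1 y' (U :\ y)).
by rewrite !inE yy' y'I !orbT.
Qed.

Lemma meet_above_below (X Y : {set V}) :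
  X \in nbrs_above -> Y \in nbrs_below -> #|X :&: Y| < #|I|.
Proof.
case/imsetP => x; rewrite inE => xU ->; case/imsetP => y yI ->.
apply: (@leq_ltn_trans #|I :\ y|); last exact/proper_card/properD1.
apply/subset_leq_card/subsetP => z.
rewrite in_setI in_setU1 !in_setD1 => /andP[/orP[/eqP -> | zI] /andP[zy zU]].
  by rewrite (negbTE xU) in zU.
by rewrite zy.
Qed.

Lemma nbrs_above_below_disjoint (X : {set V}) : X \in nbrs_above -> X \notin nbrs_below.
Proof.
case/imsetP => x; rewrite !inE !negb_or => /and3P[xa _ _] ->.
apply/imsetP => -[y yI] eqX; have /andP[ya _] := mem_I_neq yI.
have : a \in U :\ y by rewrite !inE eqxx eq_sym ya.
by rewrite -eqX !inE (negbTE aI) eq_sym (negbTE xa).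
Qed.

Lemma nbrs_below_above_disjoint (X : {set V}) : X \in nbrs_below -> X \notin nbrs_above.
Proof. exact: contraL (@nbrs_above_below_disjoint X). Qed.

Lemma common_nbr_superset (C : {set V}) : #|C| = #|I|.+1 -> I \subset C ->
  #|(a |: I) :&: C| = #|I| -> #|(b |: I) :&: C| = #|I| -> C \in nbrs_above.
Proof.
move=> cardC IC meetA meetB.
have /properP[_ [x xC xI]] : I \proper C by rewrite properEcard IC cardC leqnn.
have defC : C = x |: I.
  by apply/eqP; rewrite eq_sym eqEcard subUset sub1set xC IC cardsU1 xI cardC /=.
have neq_x u : #|(u |: I) :&: C| = #|I| -> x != u.
  by move=> meetU; apply/eqP => xu; move: meetU; rewrite -xu -defC setIid cardC; lia.
by rewrite defC; apply/imsetP; exists x; rewrite // !inE !negb_or neq_x // neq_x.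
Qed.

Lemma common_nbr_not_superset (C : {set V}) y : #|C| = #|I|.+1 -> y \in I -> y \notin C ->
  #|(a |: I) :&: C| = #|I| -> #|(b |: I) :&: C| = #|I| -> C \in nbrs_below.
Proof.
move=> cardC yI yC meetA meetB.
have subC u : u \notin I -> #|(u |: I) :&: C| = #|I| -> (u |: I) :\ y \subset C.
  move=> uI meetU; suff <- : (u |: I) :&: C = (u |: I) :\ y by apply: subsetIr.
  apply/eqP; rewrite eqEcard card_setU1D1 // meetU leqnn andbT.
  by apply/subsetP => z; rewrite !inE => /andP[-> zC]; rewrite andbT; apply: contraNneq yC => <-.
have yB : U :\ y \in nbrs_below by apply/imsetP; exists y.
suff -> : C = U :\ y by [].
apply/eqP; rewrite eq_sym eqEcard (card_mem_below yB) cardC leqnn andbT.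
apply/subsetP => z; rewrite !inE => /andP[zy /or3P[za | zb | zI]].
- by apply: (subsetP (subC a aI meetA)); rewrite !inE za zy.
- by apply: (subsetP (subC b bI meetB)); rewrite !inE zb zy.
- by apply: (subsetP (subC a aI meetA)); rewrite !inE zI zy orbT.
Qed.

Lemma common_nbrs_above_below (C : {set V}) : #|C| = #|I|.+1 ->
  (#|(a |: I) :&: C| == #|I|) && (#|(b |: I) :&: C| == #|I|) =
  (C \in nbrs_above :|: nbrs_below).
Proof.
move=> cardC; rewrite in_setU; apply/andP/orP => [[/eqP meetA /eqP meetB] | ].
  case: (boolP (I \subset C)) => [IC | /subsetPn[y yI yC]].
    by left; apply: common_nbr_superset.
  by right; apply: (common_nbr_not_superset cardC yI yC).
case=> [/imsetP[x] | /imsetP[y yI ->]].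
  by rewrite !inE !negb_or => /and3P[xa xb _] ->; rewrite !setU1I_neq 1?eq_sym.
have aU : a |: I \subset U by apply/setUS/subsetUr.
by rewrite !setIDA (setIidPl aU) (setIidPl (subsetUr _ _)) !card_setU1D1.
Qed.

Lemma closed_adj_same_side (X W : {set V}) :
  X \in nbrs_above :|: nbrs_below -> W \in nbrs_above :|: nbrs_below ->
  (X == W) || (#|W :&: X| == #|I|) = ((X \in nbrs_above) == (W \in nbrs_above)).
Proof.
rewrite !in_setU => /orP[XA | XB] /orP[WA | WB].
- rewrite XA WA; case: eqVneq => //= XW.
  by rewrite (meet_above_above WA XA) ?eqxx //; apply: contraNneq XW => ->.
- have WnA := nbrs_below_above_disjoint WB; have XW : X != W by apply: contraNneq WnA => <-.
  rewrite XA (negbTE WnA) (negbTE XW) /=; apply/negbTE.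
  by rewrite setIC neq_ltn (meet_above_below XA WB).
- have XnA := nbrs_below_above_disjoint XB; have XW : X != W by apply: contraNneq XnA => ->.
  rewrite WA (negbTE XnA) (negbTE XW) /=; apply/negbTE.
  by rewrite neq_ltn (meet_above_below WA XB).
- rewrite !(negbTE (nbrs_below_above_disjoint _)) //; case: eqVneq => //= XW.
  by rewrite (meet_below_below WB XB) ?eqxx //; apply: contraNneq XW => ->.
Qed.

Lemma closed_common_nbrs_set (P : pred {set V}) W :
  (forall X, P X -> #|X| = #|I|.+1) -> W \in nbrs_above :|: nbrs_below ->
  [set X | P X && ((#|(a |: I) :&: X| == #|I|) && (#|(b |: I) :&: X| == #|I|) &&
                   ((X == W) || (#|W :&: X| == #|I|)))] =
  [set X in if W \in nbrs_above then nbrs_above else nbrs_below | P X].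
Proof.
move=> cardP WAB; apply/setP => X; rewrite !inE andbC.
case PX: (P X); rewrite ?andbF ?andbT //.
rewrite (common_nbrs_above_below (cardP _ PX)).
case: (boolP (X \in _ :|: _)) => [XAB | ]; last first.
  rewrite in_setU negb_or => /andP[XnA XnB] /=.
  by case: ifP; rewrite ?(negbTE XnA) ?(negbTE XnB).
rewrite /= closed_adj_same_side //; case: ifP => _; first by case: (X \in nbrs_above).
rewrite in_setU in XAB; case/orP: XAB => [XA | XB].
  by rewrite XA (negbTE (nbrs_above_below_disjoint XA)).
by rewrite XB (negbTE (nbrs_below_above_disjoint XB)).
Qed.

Lemma kclique_nbrs_below (e : rel V) (X Y : {set V}) :
  is_kclique e #|I|.+1 (a |: I) -> is_kclique e #|I|.+1 (b |: I) ->
  X \in nbrs_below -> is_kclique e #|I|.+1 X ->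
  Y \in nbrs_below -> is_kclique e #|I|.+1 Y.
Proof.
move=> /kcliqueP[_ clA] /kcliqueP[_ clB] /imsetP[y yI ->] /kcliqueP[_ clX] YB.
apply/kcliqueP; split; first exact: card_mem_below.
have /andP[ya yb] := mem_I_neq yI.
case/imsetP: YB => y' _ -> z1 z2; rewrite !in_setD1 => /andP[_ z1U] /andP[_ z2U].
(* Two points of [U] lie together in [a |: I], in [b |: I], or in [X]. *)
have aY : a \in U :\ y by rewrite !inE eqxx eq_sym ya.
have bY : b \in U :\ y by rewrite !inE eqxx orbT eq_sym yb.
move: z1U z2U; rewrite !inE.
move=> /or3P[/eqP-> | /eqP-> | z1I] /or3P[/eqP-> | /eqP-> | z2I]; rewrite ?eqxx // => z12.
all: first [ by apply: clX
           | by apply: clA; rewrite ?setU11 ?setU1r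
           | by apply: clB; rewrite ?setU11 ?setU1r ].
Qed.

End CommonNeighbours.

Definition closed_common_nbrs (T : finType) (g : rel T) (u v w : T) : nat :=
  #|[set x | g u x && g v x && ((x == w) || g w x)]|.

Lemma closed_common_nbrs_iso (T1 T2 : finType) (g1 : rel T1) (g2 : rel T2) (f : T1 -> T2) :
  bijective f -> (forall x y, g2 (f x) (f y) = g1 x y) ->
  forall u v w, closed_common_nbrs g2 (f u) (f v) (f w) = closed_common_nbrs g1 u v w.
Proof.
move=> [h fK hK] fg u v w; rewrite /closed_common_nbrs -(card_imset _ (can_inj fK)).
apply: eq_card => z; rewrite -[z]hK inE (mem_imset _ _ (can_inj fK)) inE.
by rewrite !fg (inj_eq (can_inj fK)).
Qed.

(* [TJ_rel e k] and [J_rel n r] are convertible to instances of [meet_rel]. *)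
Definition meet_rel (V : finType) (P : pred {set V}) (k : nat) : rel {X : {set V} | P X} :=
  fun A B => #|val A :&: val B| == k.-1.
Arguments meet_rel {V} P k.

Lemma closed_common_nbrs_meet_rel (V : finType) (P : pred {set V}) (k : nat)
    (u v w : {X : {set V} | P X}) :
  closed_common_nbrs (meet_rel P k) u v w =
  #|[set X | P X && ((#|val u :&: X| == k.-1) && (#|val v :&: X| == k.-1) &&
                     ((X == val w) || (#|val w :&: X| == k.-1)))]|.
Proof.
rewrite /closed_common_nbrs -(card_imset _ val_inj); apply: eq_card => X.
rewrite inE; apply/imsetP/idP => [[x] | /andP[PX adjX]].
  by rewrite inE => adjx ->; rewrite (valP x).
by exists (exist _ X PX); rewrite ?inE.
Qed.

Lemma setU1_meet (V : finType) (k : nat) (X Y : {set V}) :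
  0 < k -> #|X| = k -> #|X :&: Y| = k.-1 -> exists2 x, x \notin Y & X = x |: (X :&: Y).
Proof.
move=> k0 cardX meetXY.
have /cards1P[x defx] : #|X :\: Y| == 1 by have := cardsID Y X; lia.
have : x \in X :\: Y by rewrite defx set11.
by rewrite inE => /andP[xY _]; exists x; rewrite // -{1}(setID X Y) defx setUC.
Qed.

Lemma meet_decomp (V : finType) (k : nat) (A B : {set V}) :
  0 < k -> #|A| = k -> #|B| = k -> #|A :&: B| = k.-1 ->
  exists (I : {set V}) (a b : V), [/\ a \notin I, b \notin I, a != b, A = a |: I & B = b |: I].
Proof.
move=> k0 cardA cardB meetAB.
have [a aB defA] := setU1_meet k0 cardA meetAB.
have meetBA : #|B :&: A| = k.-1 by rewrite setIC.
have [b bA defB] := setU1_meet k0 cardB meetBA.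
exists (A :&: B), a, b; rewrite [in B = _]setIC; split=> //.
- by rewrite inE negb_and aB orbT.
- by rewrite inE negb_and bA.
- by apply: contraNneq aB => ->; rewrite defB setU11.
Qed.

Section MeetGraph.

Variables (V : finType) (P : pred {set V}) (I : {set V}) (a b : V).
Hypotheses (aI : a \notin I) (bI : b \notin I) (ab : a != b).
Hypothesis cardP : forall X, P X -> #|X| = #|I|.+1.
Variables u v : {X : {set V} | P X}.
Hypotheses (defu : val u = a |: I) (defv : val v = b |: I).

Local Notation adj := (meet_rel P #|I|.+1).

Lemma meet_rel_common_nbr w :
  adj u w && adj v w = (val w \in nbrs_above I a b :|: nbrs_below I a b).
Proof. by rewrite /meet_rel /= defu defv common_nbrs_above_below // cardP ?(valP w). Qed.

Lemma closed_common_nbrs_meet w : adj u w -> adj v w ->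
  closed_common_nbrs adj u v w =
  #|[set X in if val w \in nbrs_above I a b then nbrs_above I a b else nbrs_below I a b | P X]|.
Proof.
move=> uw vw; have wAB : val w \in nbrs_above I a b :|: nbrs_below I a b.
  by rewrite -meet_rel_common_nbr uw vw.
by rewrite closed_common_nbrs_meet_rel /= defu defv closed_common_nbrs_set.
Qed.

End MeetGraph.

Lemma TJ_closed_common_nbrs (V : finType) (e : rel V) (k : nat) (u v w1 w2 : TJ_vertex e k) :
  0 < k -> TJ_rel u v -> TJ_rel u w1 && TJ_rel v w1 -> TJ_rel u w2 && TJ_rel v w2 ->
  w1 != w2 -> ~~ TJ_rel w1 w2 ->
  exists2 w, TJ_rel u w && TJ_rel v w & closed_common_nbrs (@TJ_rel V e k) u v w = k.-1.
Proof.
move=> k0 uv cw1 cw2 w12 nw12.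
have cardP X : is_kclique e k X -> #|X| = k by case/kcliqueP.
have [I [a [b [aI bI ab defu defv]]]] :=
  meet_decomp k0 (cardP _ (valP u)) (cardP _ (valP v)) (eqP uv).
have defk : k = #|I|.+1 by rewrite -(cardP _ (valP u)) defu cardsU1 aI.
subst k; have common := meet_rel_common_nbr aI bI ab cardP defu defv.
have [w cw wB] : exists2 w, TJ_rel u w && TJ_rel v w & val w \in nbrs_below I a b.
  move: (cw1) (cw2); rewrite !common !in_setU.
  case/orP=> [w1A | w1B]; last by exists w1.
  case/orP=> [w2A | w2B]; last by exists w2.
  case/negP: nw12; rewrite /TJ_rel /= (meet_above_above w1A w2A) ?eqxx //.
exists w => //; case/andP: cw => uw vw.
rewrite (closed_common_nbrs_meet aI bI ab cardP defu defv uw vw).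
rewrite (negbTE (nbrs_below_above_disjoint aI bI wB)) /= -[RHS](card_nbrs_below aI bI).
apply: eq_card => X; rewrite inE andb_idr // => XB.
apply: (kclique_nbrs_below aI bI ab _ _ wB (valP w) XB).
- by rewrite -defu (valP u).
- by rewrite -defv (valP v).
Qed.

Lemma J_closed_common_nbrs (n r : nat) (u v w : J_vertex n r) :
  0 < r -> J_rel u v -> J_rel u w -> J_rel v w ->
  closed_common_nbrs (@J_rel n r) u v w = r.-1 \/
  closed_common_nbrs (@J_rel n r) u v w = n - r.+1.
Proof.
move=> r0 uv uw vw.
have cardP (X : {set 'I_n}) : #|X| == r -> #|X| = r by move/eqP.
have [I [a [b [aI bI ab defu defv]]]] :=
  meet_decomp r0 (cardP _ (valP u)) (cardP _ (valP v)) (eqP uv).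
have defr : r = #|I|.+1 by rewrite -(cardP _ (valP u)) defu cardsU1 aI.
subst r; rewrite (closed_common_nbrs_meet aI bI ab cardP defu defv uw vw).
case: ifP => _; [right | left].
- transitivity (#|'I_n| - #|I|.+2); last by rewrite card_ord.
  rewrite -(card_nbrs_above aI bI ab).
  by apply: eq_card => X; rewrite inE andb_idr // => /card_mem_above ->.
- rewrite /= -[RHS](card_nbrs_below aI bI).
  by apply: eq_card => X; rewrite inE andb_idr // => /(card_mem_below aI bI ab) ->.
Qed.

Lemma exists_card_set (T : finType) (m : nat) : m <= #|T| -> exists S : {set T}, #|S| = m.
Proof.
elim: m => [|m IH] lemT; first by exists set0; rewrite cards0.
have [S cardS] := IH (ltnW lemT).
have /properP[_ [x _ xS]] : S \proper setT by rewrite properEcard subsetT cardsT cardS.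
by exists (x |: S); rewrite cardsU1 xS cardS.
Qed.

Lemma J_nonadjacent_common_nbrs (n r : nat) : 1 < r -> r.+1 < n ->
  exists u v w1 w2 : J_vertex n r, [/\ J_rel u v, J_rel u w1 && J_rel v w1,
    J_rel u w2 && J_rel v w2, w1 != w2 & ~~ J_rel w1 w2].
Proof.
move=> r1 rn.
have [I cardI] : exists I : {set 'I_n}, #|I| = r.-1.
  by apply: exists_card_set; rewrite card_ord; lia.
have defr : r = #|I|.+1 by lia.
subst r; have outside (S : {set 'I_n}) : #|S| < n -> exists x, x \notin S.
  move=> ltSn; have /properP[_ [x _ xS]] : S \proper setT.
    by rewrite properEcard subsetT cardsT card_ord.
  by exists x.
have [a aI] : exists a, a \notin I by apply: outside; lia.
have [b] : exists b, b \notin a |: I by apply: outside; rewrite cardsU1 aI; lia.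
rewrite in_setU1 negb_or => /andP[ba bI]; have ab : a != b by rewrite eq_sym.
have [x xU] : exists x, x \notin a |: (b |: I).
  by apply: outside; rewrite (card_union_pair aI bI ab); lia.
have [y yI] : exists y, y \in I by apply/card_gt0P; lia.
have w1A : x |: I \in nbrs_above I a b by apply/imsetP; exists x; rewrite ?in_setC.
have w2B : (a |: (b |: I)) :\ y \in nbrs_below I a b by apply/imsetP; exists y.
pose P := fun X : {set 'I_n} => #|X| == #|I|.+1.
have cardP X : P X -> #|X| = #|I|.+1 by move/eqP.
have Pu : P (a |: I) by rewrite /P cardsU1 aI.
have Pv : P (b |: I) by rewrite /P cardsU1 bI.
have Pw1 : P (x |: I) by rewrite /P (card_mem_above w1A).
have Pw2 : P ((a |: (b |: I)) :\ y) by rewrite /P (card_mem_below aI bI ab w2B).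
have common :=
  meet_rel_common_nbr aI bI ab cardP (u := exist P _ Pu) (v := exist P _ Pv) erefl erefl.
exists (exist P _ Pu), (exist P _ Pv), (exist P _ Pw1), (exist P _ Pw2); split.
- by rewrite /J_rel /= setU1I_neq.
- by rewrite common in_setU w1A.
- by rewrite common in_setU w2B orbT.
- apply/eqP => /(congr1 val) /= w12; move: w1A.
  by rewrite w12 (negbTE (nbrs_below_above_disjoint aI bI w2B)).
- by rewrite /J_rel /= neq_ltn (meet_above_below w1A w2B).
Qed.

Lemma graph_iso_sym (T1 T2 : finType) (g1 : rel T1) (g2 : rel T2) :
  graph_iso g1 g2 -> graph_iso g2 g1.
Proof.
move=> [f [[h fK hK] fg]]; exists h; split; first by exists f.
by move=> x y; rewrite -fg !hK.
Qed.

Lemma graph_iso_trans (T1 T2 T3 : finType) (g1 : rel T1) (g2 : rel T2) (g3 : rel T3) :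
  graph_iso g1 g2 -> graph_iso g2 g3 -> graph_iso g1 g3.
Proof.
move=> [f [fbij fg]] [f' [fbij' fg']]; exists (f' \o f); split; first exact: bij_comp.
by move=> x y /=; rewrite fg' fg.
Qed.

Lemma TJ_iso_J_index (n r k : nat) (V : finType) (e : rel V) :
  0 < k -> 1 < r -> r.+1 < n -> graph_iso (@TJ_rel V e k) (@J_rel n r) ->
  k = r \/ k = n - r.
Proof.
move=> k0 r1 rn /graph_iso_sym[h [hbij hh]].
have [u [v [w1 [w2 [uv cw1 cw2 w12 nw12]]]]] := J_nonadjacent_common_nbrs r1 rn.
have [|||||w cw cnt] := @TJ_closed_common_nbrs V e k (h u) (h v) (h w1) (h w2) k0.
- by rewrite hh.
- by rewrite !hh.
- by rewrite !hh.
- by rewrite (inj_eq (bij_inj hbij)).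
- by rewrite hh.
have [g hK gK] := hbij.
rewrite -[w]gK !hh in cw; rewrite -[w]gK (closed_common_nbrs_iso hbij hh) in cnt.
case/andP: cw => uw vw; have := J_closed_common_nbrs (ltnW r1) uv uw vw.
by rewrite cnt; lia.
Qed.

Lemma in_KTJ_iso (T1 T2 : finType) (g1 : rel T1) (g2 : rel T2) (k : nat) :
  graph_iso g1 g2 -> in_KTJ g1 k -> in_KTJ g2 k.
Proof.
move=> iso12 [k0 [V [e [simple_e isoTJ]]]]; split=> //.
by exists V, e; split=> //; apply: graph_iso_trans isoTJ iso12.
Qed.

Lemma J_complement_iso (n m r : nat) : 0 < m -> 0 < r -> m + r = n ->
  graph_iso (@J_rel n m) (@J_rel n r).
Proof.
move=> m0 r0 mrn.
have cardC p q (A : {set 'I_n}) : p + q = n -> #|A| == p -> #|~: A| == q.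
  by move=> pqn /eqP cardA; have := cardsC A; rewrite cardA card_ord; lia.
pose compl p q (pqn : p + q = n) (A : J_vertex n p) : J_vertex n q :=
  exist (fun B : {set 'I_n} => #|B| == q) (~: val A) (cardC p q _ pqn (valP A)).
exists (compl m r mrn); split.
  by exists (compl r m (etrans (addnC r m) mrn)) => A; apply: val_inj; rewrite /= setCK.
move=> [X cardX] [Y cardY]; rewrite /J_rel /= -setCU.
have := cardsC (X :|: Y); have := cardsUI X Y; have := subset_leq_card (subsetIl X Y).
rewrite card_ord (eqP cardX) (eqP cardY).
move: #|X :&: Y| #|X :|: Y| #|~: (X :|: Y)| => i j c *.
by apply/eqP/eqP; lia.
Qed.

Definition complete_rel (n : nat) : rel 'I_n := fun x y => x != y.

Lemma complete_simple (n : nat) : simple_graph (@complete_rel n).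
Proof. by split=> [x y | x]; rewrite /complete_rel ?eqxx // eq_sym. Qed.

Lemma TJ_complete_iso (n k : nat) : graph_iso (@TJ_rel _ (@complete_rel n) k) (@J_rel n k).
Proof.
have cliqueE (A : {set 'I_n}) : is_kclique (@complete_rel n) k A = (#|A| == k).
  by apply/kcliqueP/eqP => [[] | cardA] //; split.
pose f (C : TJ_vertex (@complete_rel n) k) : J_vertex n k :=
  exist (fun A : {set 'I_n} => #|A| == k) _ (etrans (esym (cliqueE _)) (valP C)).
pose g (A : J_vertex n k) : TJ_vertex (@complete_rel n) k :=
  exist (is_kclique _ k) _ (etrans (cliqueE _) (valP A)).
by exists f; split=> //; exists g => A; apply: val_inj.
Qed.

Lemma in_KTJ_J_self (n r : nat) : 0 < r -> in_KTJ (@J_rel n r) r.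
Proof.
move=> r0; split=> //; exists 'I_n, (@complete_rel n).
by split; [apply: complete_simple | apply: TJ_complete_iso].
Qed.

Lemma in_KTJ_J_compl (n r : nat) : 0 < r < n -> in_KTJ (@J_rel n r) (n - r).
Proof.
case/andP=> r0 rn; apply: in_KTJ_iso (in_KTJ_J_self n _); first apply: J_complement_iso.
all: lia.
Qed.

Section SplitGraph.

Variables m n : nat.

Definition is_inl (x : 'I_m + 'I_n) : bool := if x is inl _ then true else false.

Definition split_rel : rel ('I_m + 'I_n) := fun x y => (x != y) && (is_inl x || is_inl y).

Lemma split_simple : simple_graph split_rel.
Proof. by split=> [x y | x]; rewrite /split_rel ?eqxx // eq_sym orbC. Qed.

Local Notation L := (inl @: [set: 'I_m]).

Lemma card_split_set (S : {set 'I_n}) : #|L :|: inr @: S| = m + #|S|.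
Proof.
rewrite cardsU !card_imset; try exact: inl_inj; try exact: inr_inj.
suff -> : L :&: inr @: S = set0 by rewrite cards0 cardsT card_ord subn0.
by apply/setP => x; rewrite !inE; apply/negP => /andP[/imsetP[i _ ->] /imsetP[]].
Qed.

Lemma split_set_meet (X Y : {set 'I_n}) :
  (L :|: inr @: X) :&: (L :|: inr @: Y) = L :|: inr @: (X :&: Y).
Proof. by rewrite -setUIr imsetI // => x y _ _; apply: inr_inj. Qed.

Lemma kclique_split_set (S : {set 'I_n}) : #|S| = 1 -> is_kclique split_rel m.+1 (L :|: inr @: S).
Proof.
case/eqP/cards1P=> j ->; apply/kcliqueP; split; first by rewrite card_split_set cards1 addn1.
move=> x y; rewrite /split_rel !inE => /orP[/imsetP[i _ ->] | /imsetP[j1 /set1P-> ->]].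
  by move=> _ ->.
case/orP=> [/imsetP[i _ ->] | /imsetP[j2 /set1P-> ->]] //; by rewrite eqxx.
Qed.

Lemma kclique_splitE (C : {set 'I_m + 'I_n}) : is_kclique split_rel m.+1 C ->
  #|inr @^-1: C| = 1 /\ C = L :|: inr @: (inr @^-1: C).
Proof.
case/kcliqueP=> cardC clC.
have subC : C \subset L :|: inr @: (inr @^-1: C).
  by apply/subsetP => -[i | j] xC; rewrite !inE; [rewrite imset_f | rewrite orbC imset_f ?inE].
have le1 : #|inr @^-1: C| <= 1.
  rewrite leqNgt; apply/negP => /card_gt1P[i [j [iC jC ij]]]; rewrite !inE in iC jC.
  by have := clC _ _ iC jC; rewrite /split_rel /= (inj_eq (@inr_inj _ _)) ij => /(_ isT).
have ge1 : 1 <= #|inr @^-1: C|.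
  by rewrite -(leq_add2l m) addn1 -cardC -card_split_set subset_leq_card.
have card1 : #|inr @^-1: C| = 1 by apply/eqP; rewrite eqn_leq le1 ge1.
by split=> //; apply/eqP; rewrite eqEcard subC card_split_set card1 cardC addn1 leqnn.
Qed.

Lemma split_set_preimage (S : {set 'I_n}) : inr @^-1: (L :|: inr @: S) = S.
Proof.
apply/setP => j; rewrite !inE (mem_imset _ _ (@inr_inj _ _)).
by case: imsetP => // -[].
Qed.

Lemma TJ_split_iso : graph_iso (@J_rel n 1) (@TJ_rel _ split_rel m.+1).
Proof.
pose g (A : J_vertex n 1) : TJ_vertex split_rel m.+1 :=
  exist (is_kclique _ m.+1) _ (kclique_split_set (eqP (valP A))).
pose f (C : TJ_vertex split_rel m.+1) : J_vertex n 1 :=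
  exist (fun S : {set 'I_n} => #|S| == 1) _ (introT eqP (kclique_splitE (valP C)).1).
exists g; split.
  exists f => [A | C]; apply: val_inj; first exact: split_set_preimage.
  exact/esym/(kclique_splitE (valP C)).2.
move=> A B; rewrite /TJ_rel /J_rel /= split_set_meet card_split_set.
by rewrite -[X in _ + _ == X]addn0 eqn_add2l.
Qed.

End SplitGraph.

Lemma in_KTJ_J_line (n k : nat) : 0 < k -> in_KTJ (@J_rel n 1) k.
Proof.
case: k => // m _; split=> //; exists ('I_m + 'I_n)%type, (@split_rel m n).
by split; [apply: split_simple | apply/graph_iso_sym/TJ_split_iso].
Qed.

Lemma in_KTJ_J_degenerate (n r k : nat) : 0 < r < n -> minn r (n - r) = 1 ->
  in_KTJ (@J_rel n r) k <-> 0 < k.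
Proof.
case/andP=> r0 rn s1; split=> [[] // | k0].
have [-> | r1] := eqVneq r 1; first exact: in_KTJ_J_line.
by apply: in_KTJ_iso (in_KTJ_J_line n k0); apply: J_complement_iso; lia.
Qed.

Lemma in_KTJ_J (n r k : nat) : 1 < r -> r.+1 < n ->
  in_KTJ (@J_rel n r) k <-> k = r \/ k = n - r.
Proof.
move=> r1 rn; split=> [[k0 [V [e [_ isoTJ]]]] | [] ->].
- exact: TJ_iso_J_index isoTJ.
- by apply: in_KTJ_J_self; lia.
- by apply: in_KTJ_J_compl; lia.
Qed.

Theorem theorem4p14 (n r : nat) :
  2 <= n -> 1 <= r <= n - 1 ->
  let s := minn r (n - r) in
  [/\ s = 1 -> (forall k, in_KTJ (@J_rel n r) k <-> 1 <= k),
      2 <= s -> n = 2 * s -> (forall k, in_KTJ (@J_rel n r) k <-> k = s)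
    & 2 <= s -> 2 * s < n ->
        (forall k, in_KTJ (@J_rel n r) k <-> (k = s \/ k = n - s))].
Proof.
move=> n2 /andP[r0 rn] s; split=> [s1 k | s2 ns k | s2 ns k].
- by apply: in_KTJ_J_degenerate; rewrite // r0; lia.
- rewrite in_KTJ_J /s; lia.
- rewrite in_KTJ_J /s; lia.
Qed.
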